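(* Let $a,a^\dagger$ be the annihilation and creation operators of the harmonic oscillator, $[a,a^\dagger]=1$, with vacuum $|0\rangle$ ($a|0\rangle=0$, $\langle0|a^\dagger=0$, $\langle0|0\rangle=1$). For positive integers $n$ let $A_n^\dagger$ act on the formal span of $\{(a^\dagger)^m|0\rangle\}_{m\ge0}$ by $A_n^\dagger(a^\dagger)^m|0\rangle=\frac{m!}{(mn)!}(a^\dagger)^{mn}|0\rangle$, and let $A_n$ act from the right on the formal span of $\{\langle0|a^m\}_{m\ge0}$ by $\langle0|a^mA_n=\langle0|a^{mn}$. Then for $\mathrm{Re}(s)>1$, $$\zeta(s)=\langle0|\,a\Big(\prod_{q\text{ prime}}\frac{1}{1-A_q}\Big)(a^\dagger a)^{-s}\Big(\prod_{p\text{ prime}}\frac{1}{1-A_p^\dagger}\Big)a^\dagger\,|0\rangle,$$ where $\zeta(s)=\sum_{n\ge1}n^{-s}$ is the Riemann zeta function.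
   Context: The number states $|n\rangle=(a^\dagger)^n|0\rangle/\sqrt{n!}$ are orthonormal and $(a^\dagger a)^{-s}$ acts by $(a^\dagger a)^{-s}|n\rangle=n^{-s}|n\rangle$ for $n\ge1$. The products $\prod_p\frac{1}{1-A_p^\dagger}$, with $\frac{1}{1-A_p^\dagger}=\sum_{k\ge0}(A_p^\dagger)^k$, are expanded formally (the $A_p^\dagger$ commute), applied to $a^\dagger|0\rangle$ coefficientwise, similarly for the $A_q$ acting on $\langle0|a$, and the resulting pairing is evaluated termwise. *)

From Stdlib Require Import Reals.
From Coquelicot Require Import Coquelicot.
From mathcomp Require Import all_boot.
From mathcomp Require Import Rstruct.

Set Implicit Arguments.
Unset Strict Implicit.
Unset Printing Implicit Defensive.
Local Open Scope R_scope.

(* A ket is given by its coefficients in the family (a^dagger)^m |0>,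
   i.e. v represents  sum_m v m (a^dagger)^m |0>  (formally). *)
Definition ket := nat -> R.
(* A bra is given by its coefficients in the family <0| a^m. *)
Definition bra := nat -> R.

Definition ket_a1 : ket := fun m => if m == 1%N then R1 else R0.
Definition bra_a1 : bra := fun m => if m == 1%N then R1 else R0.

(* A_n^dagger (a^dagger)^m|0> = m!/(mn)! (a^dagger)^(mn)|0>, extended
   coefficientwise (for n >= 1 each target index j has at most one
   preimage m = j/n). *)
Definition Adag (n : nat) (v : ket) : ket := fun j =>
  if ((0 < n)%N) && (n %| j)%N then
    Rmult (Rdiv (INR (j %/ n)`!) (INR j`!)) (v (j %/ n))
  else R0.

Definition Aright (n : nat) (w : bra) : bra := fun j =>
  if ((0 < n)%N) && (n %| j)%N then w (j %/ n) else R0.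

(* A monomial  prod_{p} (A_p^dagger)^(k p)  with p ranging over 'I_N;
   k must be supported on primes. *)
Definition prime_supported N (k : {ffun 'I_N -> 'I_N}) : bool :=
  [forall p : 'I_N, ~~ prime p ==> (nat_of_ord (k p) == 0%N)].

Definition apply_ket N (k : {ffun 'I_N -> 'I_N}) (v : ket) : ket :=
  foldr (fun p acc => iter (k p) (Adag p) acc) v (enum 'I_N).

Definition apply_bra N (k : {ffun 'I_N -> 'I_N}) (w : bra) : bra :=
  foldl (fun acc p => iter (k p) (Aright p) acc) w (enum 'I_N).

(* Coefficient of (a^dagger)^m|0> in the formal expansion of
   (prod_p 1/(1 - A_p^dagger)) a^dagger|0>.  Only monomials with primes
   p <= m and exponents k_p <= m can contribute to degree m (every other
   monomial sends a^dagger|0> to degree > m), so the finite sum below over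
   all such prime-supported monomials is exactly the coefficientwise sum
   over all monomials of the expanded product. *)
Definition ket_expanded (m : nat) : R :=
  \big[Rplus/R0]_(k : {ffun 'I_m.+1 -> 'I_m.+1} | prime_supported k)
     apply_ket k ket_a1 m.

(* Coefficient of <0|a^m in <0| a (prod_q 1/(1 - A_q)). *)
Definition bra_expanded (m : nat) : R :=
  \big[Rplus/R0]_(k : {ffun 'I_m.+1 -> 'I_m.+1} | prime_supported k)
     apply_bra k bra_a1 m.

(* n^(-s) for n >= 1 (principal value, exp(-s ln n)); the value at n = 0
   is irrelevant (set to 0), since (a^dagger a)^(-s) is only defined on
   |n>, n >= 1, and all coefficients involved vanish at degree 0. *)
Definition npow_neg (n : nat) (s : C) : C :=
  if n == 0%N then RtoC R0
  else (exp (- Re s * ln (INR n)) * cos (Im s * ln (INR n)),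
        - (exp (- Re s * ln (INR n)) * sin (Im s * ln (INR n)))).

(* Number states: (a^dagger)^m|0> = sqrt(m!) |m>,  <0|a^m = sqrt(m!) <m|,
   <m|n> = delta_mn, (a^dagger a)^(-s)|n> = n^(-s)|n>.  Hence the n-th
   term of the termwise-evaluated pairing
   <0| a (prod_q ...) (a^dagger a)^(-s) (prod_p ...) a^dagger |0>. *)
Definition pairing_term (s : C) (n : nat) : C :=
  Cmult (RtoC ((bra_expanded n * sqrt (INR n`!)) *
               (ket_expanded n * sqrt (INR n`!))))
        (npow_neg n s).

(* Each monomial [prod_p (A_p^dagger)^(k_p)] acts as the single operator [A_d^dagger] with
   [d = prod_p p^(k_p)], and likewise for the [A_q]; by unique factorization exactly one
   monomial reaches each degree [m > 0], so the expanded ket has coefficient [1/m!] and the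
   expanded bra coefficient [1] in degree [m].  As [(a^dagger)^m|0> = sqrt(m!) |m>], the
   [m]-th term of the pairing is [m^(-s)].  For [Re s = t + 1 > 1] the series converges
   absolutely, [m^(-t-1)] being dominated by the telescoping [((m-1)^(-t) - m^(-t)) / t]. *)

From Stdlib Require Import Reals Lra FunctionalExtensionality.
From Coquelicot Require Import Coquelicot.
From HB Require Import structures.
From mathcomp Require Import all_boot.

Set Implicit Arguments.
Unset Strict Implicit.
Unset Printing Implicit Defensive.
Local Open Scope R_scope.

Lemma ln_le_sub1 x : 0 < x -> ln x <= x - 1.
Proof. by move=> x0; have := exp_ineq1_le (ln x); rewrite exp_ln //; lra. Qed.

Lemma inv_le_ln_sub x : 1 < x -> / x <= ln x - ln (x - 1).
Proof.
move=> x1; have q0 : 0 < (x - 1) / x by apply: Rdiv_lt_0_compat; lra.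
have := ln_le_sub1 q0; rewrite ln_div; try lra.
have -> : (x - 1) / x - 1 = - / x by field; lra.
lra.
Qed.

(* A discrete form of [x^(-t-1) = -(d/dx) x^(-t) / t]; it makes the zeta series telescope. *)
Lemma rpow_neg_telescope t x : 0 < t -> 1 < x ->
  exp (- (t + 1) * ln x) <= (exp (- t * ln (x - 1)) - exp (- t * ln x)) / t.
Proof.
move=> t0 x1; set E := exp (- t * ln x); set d := ln x - ln (x - 1).
have E0 : 0 < E by exact: exp_pos.
have -> : exp (- (t + 1) * ln x) = E * / x.
  rewrite /E -[/ x](exp_ln (/ x)); last by apply: Rinv_0_lt_compat; lra.
  by rewrite -exp_plus ln_Rinv; [congr exp; ring | lra].
have -> : exp (- t * ln (x - 1)) = E * exp (t * d).
  by rewrite /E -exp_plus; congr exp; rewrite /d; ring.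
have d_le : d <= (exp (t * d) - 1) / t.
  by apply/Rle_div_r => //; have := exp_ineq1_le (t * d); lra.
have -> : (E * exp (t * d) - E) / t = E * ((exp (t * d) - 1) / t) by field; lra.
apply: Rmult_le_compat_l; first lra.
by apply: Rle_trans d_le; exact: inv_le_ln_sub.
Qed.

Lemma sum_n_SR (a : nat -> R) n : sum_n a n.+1 = sum_n a n + a n.+1.
Proof. exact: sum_Sn. Qed.

Lemma ex_series_nonneg_bounded (a : nat -> R) M :
  (forall n, 0 <= a n) -> (forall n, sum_n a n <= M) -> ex_series a.
Proof.
move=> a_ge0 bounded.
have incr n : sum_n a n <= sum_n a n.+1.
  by rewrite sum_n_SR; have := a_ge0 n.+1; lra.
by have [l Hl] := ex_finite_lim_seq_incr (sum_n a) M incr bounded; exists l.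
Qed.

Definition nat_rpow_neg (sigma : R) (n : nat) : R :=
  if n is 0%N then 0 else exp (- sigma * ln (INR n)).

Lemma nat_rpow_neg_S sigma n : nat_rpow_neg sigma n.+1 = exp (- sigma * ln (INR n.+1)).
Proof. by []. Qed.

Lemma nat_rpow_neg_ge0 sigma n : 0 <= nat_rpow_neg sigma n.
Proof. by case: n => [|n] /=; [lra | left; exact: exp_pos]. Qed.

Lemma sum_nat_rpow_neg_le t N : 0 < t ->
  sum_n (nat_rpow_neg (t + 1)) N.+1 <= 1 + (1 - exp (- t * ln (INR N.+1))) / t.
Proof.
move=> t0; elim: N => [|N IH].
  by rewrite sum_n_SR sum_O /= ln_1 !Rmult_0_r exp_0 /Rdiv; lra.
have x1 : 1 < INR N.+2.
  by have := lt_0_INR N.+1 (Nat.lt_0_succ N); rewrite [INR N.+2]S_INR; lra.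
have := rpow_neg_telescope t0 x1.
rewrite (_ : INR N.+2 - 1 = INR N.+1); last by rewrite [INR N.+2]S_INR; ring.
rewrite sum_n_SR nat_rpow_neg_S => step.
apply: Rle_trans (Rplus_le_compat _ _ _ _ IH step) _.
by apply: Req_le; field; lra.
Qed.

Lemma ex_series_nat_rpow_neg sigma : 1 < sigma -> ex_series (nat_rpow_neg sigma).
Proof.
move=> sigma1; set t := sigma - 1; have t0 : 0 < t by rewrite /t; lra.
have -> : sigma = t + 1 by rewrite /t; ring.
apply: (ex_series_nonneg_bounded (M := 1 + / t)) => [n|]; first exact: nat_rpow_neg_ge0.
case=> [|N]; first by rewrite sum_O /=; have := Rinv_0_lt_compat t t0; lra.
apply: Rle_trans (sum_nat_rpow_neg_le N t0) _.
have := exp_pos (- t * ln (INR N.+1)); have := Rinv_0_lt_compat t t0.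
rewrite /Rdiv; nra.
Qed.

Lemma Cmod_npow_neg n s : Cmod (npow_neg n s) = nat_rpow_neg (Re s) n.
Proof.
case: n => [|n]; first by rewrite /npow_neg /= Cmod_0.
rewrite /npow_neg /= /Cmod /=.
set E := exp _; set a := Rmult (Im s) _.
have E0 : 0 < E by exact: exp_pos.
have := sin2_cos2 a; rewrite /Rsqr => pythagoras.
have -> : Rplus (pow (E * cos a) 2) (pow (- (E * sin a)) 2) = pow E 2.
  by rewrite -[RHS]Rmult_1_r -pythagoras /=; ring.
by rewrite sqrt_pow2 //; lra.
Qed.

Lemma ex_series_npow_neg s : 1 < Re s -> ex_series (fun n => npow_neg n s).
Proof.
move=> s1; apply: (@ex_series_le C_AbsRing C_CompleteNormedModule _ (nat_rpow_neg (Re s))).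
  by move=> n; rewrite /norm /= Cmod_npow_neg; exact: Rle_refl.
exact: ex_series_nat_rpow_neg.
Qed.

Lemma INR_fact_neq0 n : INR n`! <> 0.
Proof. by apply: not_0_INR; apply/eqP; rewrite -lt0n fact_gt0. Qed.

Lemma dvdn_mul_divn n m j : (0 < n)%N -> (n %| j)%N -> (n * m %| j)%N = (m %| j %/ n)%N.
Proof. by move=> n0 nj; rewrite -{1}(divnK nj) mulnC dvdn_pmul2r. Qed.

Lemma Adag1 v : Adag 1 v = v.
Proof.
apply: functional_extensionality => j; rewrite /Adag /= dvd1n divn1.
by field; exact: INR_fact_neq0.
Qed.

Lemma AdagM n m v : Adag n (Adag m v) = Adag (n * m) v.
Proof.
apply: functional_extensionality => j; rewrite /Adag muln_gt0.
have [->|n0] //= := posnP n.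
have [->|m0] /= := posnP m; first by case: ifP => _ //; rewrite Rmult_0_r.
case nj: (n %| j)%N; last first.
  by case: ifP => // /(dvdn_trans (dvdn_mulr _ (dvdnn n))); rewrite nj.
rewrite dvdn_mul_divn //; case: ifP => _; last by rewrite Rmult_0_r.
by rewrite divnMA; field; split; exact: INR_fact_neq0.
Qed.

Lemma iter_Adag e p v : iter e (Adag p) v = Adag (p ^ e) v.
Proof. by elim: e => [|e IH]; rewrite ?Adag1 // iterS IH AdagM expnS. Qed.

Lemma Aright1 w : Aright 1 w = w.
Proof. by apply: functional_extensionality => j; rewrite /Aright /= dvd1n divn1. Qed.

Lemma ArightM n m w : Aright n (Aright m w) = Aright (n * m) w.
Proof.
apply: functional_extensionality => j; rewrite /Aright muln_gt0.
have [->|n0] //= := posnP n.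
have [->|m0] /= := posnP m; first by case: ifP.
case nj: (n %| j)%N; last first.
  by case: ifP => // /(dvdn_trans (dvdn_mulr _ (dvdnn n))); rewrite nj.
by rewrite dvdn_mul_divn // divnMA.
Qed.

Lemma iter_Aright e p w : iter e (Aright p) w = Aright (p ^ e) w.
Proof. by elim: e => [|e IH]; rewrite ?Aright1 // iterS IH ArightM expnS. Qed.

Definition prod_pow N (k : {ffun 'I_N -> 'I_N}) : nat := (\prod_(p <- enum 'I_N) p ^ k p)%N.

Lemma apply_ketE N (k : {ffun 'I_N -> 'I_N}) v : apply_ket k v = Adag (prod_pow k) v.
Proof.
rewrite /apply_ket /prod_pow; elim: (enum 'I_N) => [|p r IH]; first by rewrite big_nil Adag1.
by rewrite big_cons /= IH iter_Adag AdagM.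
Qed.

Lemma apply_braE N (k : {ffun 'I_N -> 'I_N}) w : apply_bra k w = Aright (prod_pow k) w.
Proof.
rewrite /apply_bra /prod_pow; elim: (enum 'I_N) w => [|p r IH] w; first by rewrite big_nil Aright1.
by rewrite big_cons /= IH iter_Aright ArightM mulnC.
Qed.

Lemma prime_supported_pow_gt0 N (k : {ffun 'I_N -> 'I_N}) (p : 'I_N) :
  prime_supported k -> (0 < p ^ k p)%N.
Proof.
move/forallP/(_ p); case: (boolP (prime p)) => [p_pr _|_ /eqP ->].
  by rewrite expn_gt0 prime_gt0.
by rewrite expn0.
Qed.

Lemma logn_prod (I : Type) q (r : seq I) (F : I -> nat) : (forall i, 0 < F i)%N ->
  logn q (\prod_(i <- r) F i) = (\sum_(i <- r) logn q (F i))%N.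
Proof.
move=> F_gt0; elim: r => [|i r IH]; first by rewrite !big_nil logn1.
by rewrite !big_cons lognM ?IH ?prodn_gt0.
Qed.

HB.instance Definition _ :=
  Monoid.isComLaw.Build R R0 Rplus (fun a b c => esym (Rplus_assoc a b c)) Rplus_comm Rplus_0_l.

Section UniqueFactorization.
Variable m : nat.
Hypothesis m_gt0 : (0 < m)%N.

Definition logn_ffun : {ffun 'I_m.+1 -> 'I_m.+1} := [ffun p : 'I_m.+1 => inord (logn p m)].

Lemma logn_ffunE p : nat_of_ord (logn_ffun p) = logn p m.
Proof. by rewrite ffunE inordK // ltnS ltnW // ltn_logl. Qed.

Lemma prime_supported_logn_ffun : prime_supported logn_ffun.
Proof. by apply/forallP => p; apply/implyP => p_npr; rewrite logn_ffunE lognE (negbTE p_npr). Qed.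

Lemma prod_pow_logn_ffun : prod_pow logn_ffun = m.
Proof.
rewrite /prod_pow big_enum /= -[RHS](partnT m_gt0) /partn big_mkord.
by apply: eq_big => // p; rewrite logn_ffunE.
Qed.

Lemma prod_pow_inj (k : {ffun 'I_m.+1 -> 'I_m.+1}) :
  prime_supported k -> prod_pow k = m -> k = logn_ffun.
Proof.
move=> k_pr k_m; apply/ffunP => q; apply: val_inj; rewrite /= logn_ffunE.
have -> : logn q m = logn q (prod_pow k) by rewrite k_m.
have [q_pr|q_npr] := boolP (prime q); last first.
  by rewrite lognE (negbTE q_npr); move/forallP: k_pr => /(_ q) /implyP /(_ q_npr) /eqP.
rewrite /prod_pow logn_prod => [|p]; last exact: prime_supported_pow_gt0.
rewrite big_enum /= (bigD1 q) //= lognX logn_prime // eqxx muln1 big1 ?addn0 // => p p_neq_q.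
rewrite lognX; have [p_pr|p_npr] := boolP (prime p).
  by rewrite logn_prime // eq_sym (inj_eq val_inj) (negbTE p_neq_q) muln0.
by move/forallP: k_pr => /(_ p) /implyP /(_ p_npr) /eqP ->.
Qed.

Lemma big_prime_supported_prod_pow (F : {ffun 'I_m.+1 -> 'I_m.+1} -> R) c :
  (forall k, prime_supported k -> F k = if prod_pow k == m then c else 0) ->
  \big[Rplus/R0]_(k : {ffun 'I_m.+1 -> 'I_m.+1} | prime_supported k) F k = c.
Proof.
move=> FE; rewrite (bigD1 logn_ffun) ?prime_supported_logn_ffun //=.
rewrite FE ?prime_supported_logn_ffun // prod_pow_logn_ffun eqxx big1 ?Rplus_0_r //.
move=> k /andP[k_pr k_neq]; rewrite FE //; case: eqP => // /(prod_pow_inj k_pr) k_eq.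
by rewrite k_eq eqxx in k_neq.
Qed.

End UniqueFactorization.

Lemma Adag_ket_a1 d m : (0 < m)%N -> Adag d ket_a1 m = if d == m then / INR m`! else 0.
Proof.
move=> m_gt0; rewrite /Adag /ket_a1; have [->|d_neq] := eqVneq d m.
  by rewrite m_gt0 dvdnn divnn m_gt0 /=; field; exact: INR_fact_neq0.
case: ifP => // /andP[_ d_dvd]; case: eqP => [m_eq|_]; last by rewrite Rmult_0_r.
by move: d_neq; rewrite -(divnK d_dvd) m_eq mul1n eqxx.
Qed.

Lemma Aright_bra_a1 d m : (0 < m)%N -> Aright d bra_a1 m = if d == m then 1 else 0.
Proof.
move=> m_gt0; rewrite /Aright /bra_a1; have [->|d_neq] := eqVneq d m.
  by rewrite m_gt0 dvdnn divnn m_gt0.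
case: ifP => // /andP[_ d_dvd]; case: eqP => // m_eq.
by move: d_neq; rewrite -(divnK d_dvd) m_eq mul1n eqxx.
Qed.

Lemma ket_expandedE m : (0 < m)%N -> ket_expanded m = / INR m`!.
Proof.
move=> m_gt0; apply: big_prime_supported_prod_pow => // k _.
by rewrite apply_ketE Adag_ket_a1.
Qed.

Lemma bra_expandedE m : (0 < m)%N -> bra_expanded m = 1.
Proof.
move=> m_gt0; apply: big_prime_supported_prod_pow => // k _.
by rewrite apply_braE Aright_bra_a1.
Qed.

Lemma pairing_termE s n : pairing_term s n = npow_neg n s.
Proof.
rewrite /pairing_term; case: n => [|n]; first by rewrite /npow_neg /= Cmult_0_r.
rewrite ket_expandedE // bra_expandedE //.
have fact_pos : 0 < INR n.+1`! by apply/lt_0_INR/ltP; exact: fact_gt0.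
rewrite Rmult_1_l Rmult_comm Rmult_assoc sqrt_sqrt; last lra.
by rewrite Rinv_l; [exact: Cmult_1_l | lra].
Qed.

Theorem mainTheorem6 (s : C) :
  (1 < Re s)%R ->
  exists zeta_s : C,
    is_series (fun n => npow_neg n s) zeta_s /\
    is_series (fun n => pairing_term s n) zeta_s.
Proof.
move=> s_gt1; have [zeta_s zetaE] := ex_series_npow_neg s_gt1.
exists zeta_s; split => //.
by apply: is_series_ext zetaE => n; rewrite pairing_termE.
Qed.
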